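(* Let $X$ be a sofic shift and $\varphi$ a flip for $(X,\sigma_X)$. Then there are a finite set $\mathcal{A}$, a map $\mathcal{L}:\mathcal{A}\to\mathcal{B}_1(X)$ and zero-one $\mathcal{A}\times\mathcal{A}$ matrices $A$ and $J$ with the following properties: (1) $\mathcal{L}_\infty:X_A\to X$ is a factoring; (2) $\mathcal{L}_\infty$ has no graph diamonds; (3) $JA=A^\top J$ and $J^2=I$; (4) $\mathcal{L}_\infty\circ\varphi_{J,A}=\varphi\circ\mathcal{L}_\infty$; (5) if $\delta\in\{0,1\}$, $x\in X$ and $\sigma_X^\delta\varphi(x)=x$, then there is $y\in X_A$ with $\mathcal{L}_\infty(y)=x$ and $\sigma_A^\delta\varphi_{J,A}(y)=y$.
   Context: For a shift space $X$, $\sigma_X$ is the shift map and $\mathcal{B}_1(X)$ is the set of symbols occurring in points of $X$. A flip for $(X,\sigma_X)$ is a homeomorphism $\varphi:X\to X$ with $\varphi\sigma_X=\sigma_X^{-1}\varphi$ and $\varphi^2=\mathrm{id}_X$. For a zero-one $\mathcal{A}\times\mathcal{A}$ matrix $A$, $X_A=\{y\in\mathcal{A}^{\mathbb{Z}}:A(y_i,y_{i+1})=1\ \forall i\in\mathbb{Z}\}$ and $\sigma_A$ is the shift map on $X_A$. $\mathcal{L}_\infty$ is the one-block code $\mathcal{L}_\infty(y)_i=\mathcal{L}(y_i)$; it is a factoring onto $X$ if $\mathcal{L}_\infty(X_A)=X$. $\mathcal{L}_\infty$ has no graph diamonds if there are no two distinct words $a_0\cdots a_n\neq b_0\cdots b_n$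 ($n\ge1$) with $A(a_i,a_{i+1})=A(b_i,b_{i+1})=1$ for all $i<n$, $a_0=b_0$, $a_n=b_n$ and $\mathcal{L}(a_i)=\mathcal{L}(b_i)$ for all $i$. If $J$ is a zero-one matrix with $J^2=I$, it is a symmetric permutation matrix, and $\tau:\mathcal{A}\to\mathcal{A}$ denotes the map with $J(a,\tau(a))=1$; if moreover $JA=A^\top J$, then $\varphi_{J,A}:X_A\to X_A$, $\varphi_{J,A}(y)_i=\tau(y_{-i})$, is a flip for $(X_A,\sigma_A)$. *)

From mathcomp Require Import all_boot all_order all_algebra.
Set Implicit Arguments. Unset Strict Implicit. Unset Printing Implicit Defensive.
Import Order.TTheory GRing.Theory Num.Theory.
Local Open Scope ring_scope.

Definition point (S : Type) := int -> S.

Definition shift (S : Type) (x : point S) : point S := fun i => x (i + 1).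

Definition shift_inv (S : Type) (x : point S) : point S := fun i => x (i - 1).

Definition Linf (V S : Type) (L : V -> S) (y : point V) : point S :=
  fun i => L (y i).

Definition vshift (V : Type) (R : V -> V -> bool) (y : point V) : Prop :=
  forall i : int, R (y i) (y (i + 1)).

Definition sofic (S : finType) (X : point S -> Prop) : Prop :=
  exists (V : finType) (R : V -> V -> bool) (L : V -> S),
    forall x, X x <-> exists y, vshift R y /\ x = Linf L y.

Definition B1 (S : Type) (X : point S -> Prop) (a : S) : Prop :=
  exists x, X x /\ exists i : int, x i = a.

(* continuity on X w.r.t. the product topology (alphabet discrete) *)
Definition agree_on (S : Type) (n : nat) (x y : point S) : Prop :=
  forall i : int, `|i| <= n%:Z -> x i = y i.

Definition continuous_on (S : Type) (X : point S -> Prop)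
  (f : point S -> point S) : Prop :=
  forall x, X x -> forall n : nat, exists m : nat,
    forall y, X y -> agree_on m x y -> agree_on n (f x) (f y).

(* Since phi is an
   involution, being a continuous self-map of X with phi^2 = id is
   exactly being a homeomorphism with phi^2 = id. *)
Definition is_flip (S : Type) (X : point S -> Prop)
  (phi : point S -> point S) : Prop :=
  [/\ (forall x, X x -> X (phi x)),
      continuous_on X phi,
      (forall x, X x -> phi (shift x) = shift_inv (phi x))
    & (forall x, X x -> phi (phi x) = x) ].

Definition zero_one (n : nat) (M : 'M[int]_n) : Prop :=
  forall i j, M i j = 0 \/ M i j = 1.

Definition XA (n : nat) (A : 'M[int]_n) (y : point 'I_n) : Prop :=
  forall i : int, A (y i) (y (i + 1)) = 1.

(* tau: the map with J(a, tau a) = 1 (default a if no such entry) *)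
Definition tauJ (n : nat) (J : 'M[int]_n) (a : 'I_n) : 'I_n :=
  odflt a [pick b | J a b == 1].

Definition phiJA (n : nat) (J : 'M[int]_n) (y : point 'I_n) : point 'I_n :=
  fun i => tauJ J (y (- i)).

Definition no_graph_diamonds (n : nat) (S : Type) (A : 'M[int]_n)
  (L : 'I_n -> S) : Prop :=
  ~ exists (m : nat) (a b : nat -> 'I_n),
      [/\ (1 <= m)%N,
          (forall i, (i < m)%N -> A (a i) (a i.+1) = 1 /\ A (b i) (b i.+1) = 1),
          a 0%N = b 0%N /\ a m = b m,
          (forall i, (i <= m)%N -> L (a i) = L (b i))
        & exists i, (i <= m)%N /\ a i <> b i].

From mathcomp Require Import all_boot all_order all_algebra.
From mathcomp Require Import perm boolp zify ring.
Import Order.TTheory GRing.Theory Num.Theory.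
Set Implicit Arguments. Unset Strict Implicit. Unset Printing Implicit Defensive.
Local Open Scope ring_scope.

(* Fix a vertex-labelled presentation (R, L) of X.  By compactness the flip is
   uniformly continuous, so phi(x)_0 only depends on x_(-N) ... x_N for some N.
   Refine the presentation into states recording, at a position i of x, the symbol
   x_i, the N symbols on each side, the set of R-vertices at which a presentation
   of the past of x can end and the set from which one of its future can start.
   The past data of a state is determined by its predecessor and the future data
   by its successor, so paths with equal labels and endpoints coincide, and a
   state at position i determines phi(x)_(-i).  The final graph has as vertices
   the pairs (u, v) of states, u read forward along x and v backward along phi(x),
   each labelled by the flip of the other; exchanging u and v is the involution
   whose permutation matrix is J. *)

Definition shiftz (T : Type) (k : int) (x : point T) : point T := fun j => x (j + k).

Lemma shiftzD (T : Type) k l (x : point T) : shiftz k (shiftz l x) = shiftz (k + l) x.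
Proof. by apply: funext => j; rewrite /shiftz addrA. Qed.

Lemma shiftz0 (T : Type) (x : point T) : shiftz 0 x = x.
Proof. by apply: funext => j; rewrite /shiftz addr0. Qed.

Lemma shiftzKN (T : Type) k (x : point T) : shiftz k (shiftz (- k) x) = x.
Proof. by rewrite shiftzD subrr shiftz0. Qed.

Lemma iter_shift (T : Type) d (z : point T) : iter d (@shift T) z = shiftz d%:Z z.
Proof.
elim: d => [|d IHd]; first by rewrite shiftz0.
by rewrite iterS IHd /shift /shiftz; apply: funext => i; rewrite -addrA -PoszD add1n.
Qed.

Lemma iter_shift_map (T U : Type) (f : T -> U) d (z : point T) :
  iter d (@shift U) (fun i => f (z i)) = fun i => f (iter d (@shift T) z i).
Proof. by elim: d => //= d ->. Qed.

Lemma sofic_shiftz (S : finType) (X : point S -> Prop) k x :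
  sofic X -> X x -> X (shiftz k x).
Proof.
move=> [V [R [L HX]]] /HX [y [Ry ->]]; apply/HX; exists (shiftz k y); split=> //.
by move=> i; rewrite /shiftz addrAC; apply: Ry.
Qed.

Lemma flip_shiftz (S : finType) (X : point S -> Prop) phi k x :
  sofic X -> is_flip X phi -> X x -> phi (shiftz k x) = shiftz (- k) (phi x).
Proof.
move=> sX [_ _ phi_shift _].
have phi_shiftz1 y : X y -> phi (shiftz 1 y) = shiftz (-1) (phi y) by exact: phi_shift.
have phi_shiftzN1 y : X y -> phi (shiftz (-1) y) = shiftz 1 (phi y).
  move=> Xy; rewrite -[in RHS](shiftzKN 1 y) phi_shiftz1 ?shiftzKN //.
  exact: sofic_shiftz.
elim/int_rect: k x => [|n IHn|n IHn] x Xx; first by rewrite oppr0 !shiftz0.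
  rewrite -addn1 PoszD addrC -shiftzD phi_shiftz1; last exact: sofic_shiftz.
  by rewrite IHn // shiftzD opprD.
rewrite -addn1 PoszD opprD addrC -shiftzD phi_shiftzN1; last exact: sofic_shiftz.
by rewrite IHn // shiftzD opprD opprK.
Qed.

Lemma agree_on_sym (T : Type) n (x y : point T) : agree_on n x y -> agree_on n y x.
Proof. by move=> xy i Hi; rewrite xy. Qed.

Lemma agree_on_trans (T : Type) n (x y z : point T) :
  agree_on n x y -> agree_on n y z -> agree_on n x z.
Proof. by move=> xy yz i Hi; rewrite xy ?yz. Qed.

Lemma agree_on_le (T : Type) m n (x y : point T) :
  (m <= n)%N -> agree_on n x y -> agree_on m x y.
Proof. by move=> mn xy i Hi; apply: xy; lia. Qed.

Definition window (T : Type) (m : nat) (x : point T) : {ffun 'I_(2 * m + 1) -> T} :=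
  [ffun k : 'I_(2 * m + 1) => x ((val k)%:Z - m%:Z)].

Lemma window_agree (T : Type) m (x y : point T) :
  window m x = window m y -> agree_on m x y.
Proof.
move=> /ffunP xy i Hi; have k_lt : (absz (i + m%:Z)%R < 2 * m + 1)%N by lia.
have := xy (Ordinal k_lt); rewrite !ffunE /=.
by have -> : (absz (i + m%:Z)%R)%:Z - m%:Z = i by lia.
Qed.

Definition inf_often (P : nat -> Prop) := forall K, exists2 N, (K <= N)%N & P N.

Lemma inf_often_pigeonhole (T : finType) (P : nat -> Prop) (c : nat -> T) :
  inf_often P -> exists t, inf_often (fun N => P N /\ c N = t).
Proof.
move=> infP; apply: contrapT => none.
have bound t : exists K, forall N, (K <= N)%N -> P N -> c N <> t.
  apply: contrapT => unbounded; apply: none; exists t => K.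
  apply: contrapT => noN; apply: unbounded; exists K => N KN PN cN.
  by apply: noN; exists N.
have [K HK] := choice bound.
have [N KN PN] := infP (\max_t K t).
exact: HK (c N) N (leq_trans (leq_bigmax (c N)) KN) PN erefl.
Qed.

Lemma inf_often_window (T : finType) (xs : nat -> point T) m (P : nat -> Prop) :
  inf_often P ->
  exists2 N0, P N0 & inf_often (fun N => P N /\ agree_on m (xs N) (xs N0)).
Proof.
move=> /(inf_often_pigeonhole (fun N => window m (xs N))) [t inf_t].
have [N0 _ [PN0 wN0]] := inf_t 0%N; exists N0 => // K.
have [N KN [PN wN]] := inf_t K; exists N => //; split=> //.
by apply: window_agree; rewrite wN wN0.
Qed.

Lemma exists_cluster_point (T : finType) (xs : nat -> point T) :
  exists g : point T, forall m, inf_often (fun N => agree_on m (xs N) g).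
Proof.
pose near m b := inf_often (fun N => agree_on m (xs N) b).
have refine mb : exists b', near mb.1 mb.2 -> near mb.1.+1 b' /\ agree_on mb.1 mb.2 b'.
  case: (pselect (near mb.1 mb.2)) => [nearb|]; last by exists mb.2.
  have [N0 bN0 infN0] := inf_often_window xs mb.1.+1 nearb.
  exists (xs N0) => _; split; last exact: agree_on_sym.
  by move=> K; have [N KN [_ NN0]] := infN0 K; exists N.
have [next Hnext] := choice refine.
have [N0 _ inf0] := inf_often_window xs 0 (P := fun _ => True) (fun K => ex_intro2 _ _ K (leqnn K) I).
pose bs := fix bs m := if m is m'.+1 then next (m', bs m') else xs N0.
have near_bs m : near m (bs m) /\ agree_on m (bs m) (bs m.+1).
  have near0 : near 0 (bs 0) by move=> K; have [N KN [_ NN0]] := inf0 K; exists N.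
  elim: m => [|m [nearm _]]; first exact: conj near0 (Hnext (0%N, bs 0) near0).2.
  have [nearm1 _] := Hnext (m, bs m) nearm.
  exact: conj nearm1 (Hnext (m.+1, bs m.+1) nearm1).2.
have nested m d : agree_on m (bs m) (bs (m + d)%N).
  elim: d => [|d IHd]; first by rewrite addn0.
  apply: agree_on_trans IHd _; rewrite addnS.
  exact: agree_on_le (leq_addr d m) (near_bs (m + d)%N).2.
exists (fun i => bs (absz i) i) => m.
suff bs_g : agree_on m (bs m) (fun i => bs (absz i) i).
  by move=> K; have [N KN xsN] := (near_bs m).1 K; exists N => //; exact: agree_on_trans bs_g.
move=> i Hi; have -> : m = (absz i + (m - absz i))%N by lia.
by apply/esym/nested; lia.
Qed.

Lemma sofic_uniformly_continuous (S : finType) (X : point S -> Prop) f :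
  sofic X -> continuous_on X f ->
  exists N : nat, forall x y, X x -> X y -> agree_on N x y -> f x 0 = f y 0.
Proof.
move=> [V [R [L HX]]] f_cont; apply: contrapT => not_unif.
have bad N : exists p : point V * point S, [/\ vshift R p.1, X p.2,
    agree_on N (Linf L p.1) p.2 & f (Linf L p.1) 0 <> f p.2 0].
  apply: contrapT => noN; apply: not_unif; exists N => x y /HX [g [Rg ->]] Xy gy.
  by apply: contrapT => fne; apply: noN; exists (g, y).
have [p Hp] := choice bad.
have [g cluster] := exists_cluster_point (fun N => (p N).1).
have Rg : vshift R g.
  move=> i; have [N _ gN] := cluster (absz i).+1 0%N.
  by rewrite -!gN; [case: (Hp N) | lia | lia].
have Xg : X (Linf L g) by apply/HX; exists g.
have [m fm] := f_cont _ Xg 0%N.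
have [N mN gN] := cluster m m.
have [RpN XpN pN fpN] := Hp N.
have g_pN1 : agree_on m (Linf L g) (Linf L (p N).1).
  by move=> i Hi; rewrite /Linf gN.
have g_pN2 : agree_on m (Linf L g) (p N).2.
  exact: agree_on_trans g_pN1 (agree_on_le mN pN).
have XpN1 : X (Linf L (p N).1) by apply/HX; exists (p N).1.
by apply: fpN; rewrite -(fm _ XpN1 g_pN1 0) // (fm _ XpN g_pN2 0).
Qed.

Section Windows.
Variables (S : Type) (N : nat).

Definition tcons (t : N.-tuple S) (a : S) : N.-tuple S := [tuple nth a (a :: t) k | k < N].

Definition window_before (x : point S) (i : int) : N.-tuple S :=
  [tuple x (i - 1 - (val k)%:Z) | k < N].

Lemma window_before_succ x i : window_before x (i + 1) = tcons (window_before x i) (x i).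
Proof.
apply: eq_from_tnth => k; rewrite !tnth_mktuple.
case: k => [[|k] Hk] /=; first by congr x; lia.
rewrite (nth_map (Ordinal (ltnW Hk))) ?size_enum_ord ?(ltnW Hk) // nth_enum_ord ?(ltnW Hk) //.
congr x; lia.
Qed.

Lemma tcons_recurrence (t : int -> N.-tuple S) (x : point S) :
  (forall i, t (i + 1) = tcons (t i) (x i)) ->
  forall i (k : 'I_N), tnth (t i) k = x (i - 1 - (val k)%:Z).
Proof.
move=> tS i [k Hk]; rewrite (tnth_nth (x 0)) /=.
elim: k i Hk => [|k IHk] i Hk; rewrite -(subrK 1 i) tS;
  rewrite -[nth _ _ _]/(nth _ (tcons _ _) (Ordinal Hk)) -tnth_nth tnth_mktuple //=.
  by congr x; lia.
rewrite (set_nth_default (x 0)) ?size_tuple ?IHk ?(ltnW Hk) //; congr x; lia.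
Qed.

End Windows.

Lemma chain_from (T : finType) (r : rel T) (F : nat -> {set T}) t0 :
  (forall n, {subset F n <= [set t | [exists t' in F n.+1, r t t']]}) -> t0 \in F 0%N ->
  exists f : nat -> T, [/\ f 0%N = t0, forall n, f n \in F n & forall n, r (f n) (f n.+1)].
Proof.
move=> Fsucc Ft0.
pose f := fix f n := if n is n'.+1 then odflt (f n') [pick t in F n | r (f n') t] else t0.
have f_succ n : f n \in F n -> f n.+1 \in F n.+1 /\ r (f n) (f n.+1).
  move=> /Fsucc; rewrite inE => /existsP [t /andP [Ft rt]] /=.
  by case: pickP => [t' /andP [] // | /(_ t)]; rewrite Ft rt.
have Ff n : f n \in F n by elim: n => // n /f_succ [].
by exists f; split=> // n; case: (f_succ n (Ff n)).
Qed.

Lemma recurrence_eq (T : Type) (f : nat -> T -> T) m (u u' : nat -> T) :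
  (forall i, (i < m)%N -> u i.+1 = f i (u i) /\ u' i.+1 = f i (u' i)) ->
  u 0%N = u' 0%N -> forall i, (i <= m)%N -> u i = u' i.
Proof.
move=> uS u0; elim=> [|i IHi] im //.
by have [-> ->] := uS i im; rewrite IHi // ltnW.
Qed.

Lemma backward_recurrence_eq (T : Type) (f : nat -> T -> T) m (u u' : nat -> T) :
  (forall i, (i < m)%N -> u i = f i (u i.+1) /\ u' i = f i (u' i.+1)) ->
  u m = u' m -> forall i, (i <= m)%N -> u i = u' i.
Proof.
move=> uP um i im; rewrite -(subKn im).
apply: (@recurrence_eq _ (fun j => f (m - j.+1)%N) m (fun j => u (m - j)%N) (fun j => u' (m - j)%N)) (leq_subr i m) => [j jm|]; last by rewrite subn0.
by rewrite -(subnSK jm); apply: uP; lia.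
Qed.

Section Reachability.
Variables (S V : finType) (L : V -> S) (R : rel V).

Definition follow (P : {set V}) (a : S) : {set V} :=
  [set v' | (L v' == a) && [exists v in P, R v v']].

Definition reach_set (x : point S) (i : int) : {set V} :=
  [set v | `[< exists h : point V, [/\ forall j, j < i -> R (h j) (h (j + 1)),
                                   forall j, j <= i -> L (h j) = x j & h i = v] >]].

Lemma reach_set_succ x i : reach_set x (i + 1) = follow (reach_set x i) (x (i + 1)).
Proof.
apply/setP => v'; rewrite !inE; apply/asboolP/andP.
  move=> [h [Rh Lh hv']]; split; first by rewrite -hv' Lh.
  apply/existsP; exists (h i); rewrite -hv' Rh ?ltrDl // andbT inE.
  by apply/asboolP; exists h; split=> // j ji; [apply: Rh | apply: Lh]; lia.
move=> [/eqP Lv' /existsP [v /andP [/[!inE] /asboolP [h [Rh Lh hv]] Rvv']]].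
exists (fun j => if j == i + 1 then v' else h j); split; last by rewrite eqxx.
  move=> j ji; rewrite (_ : j == i + 1 = false); last by apply/eqP; lia.
  have [->|neji] := eqVneq j i; first by rewrite eqxx hv.
  rewrite (_ : j + 1 == i + 1 = false); last by apply/eqP; lia.
  by apply: Rh; have := neji; lia.
by move=> j ji; case: eqP => [->|ne] //; apply: Lh; lia.
Qed.

Lemma vshift_reach_set g i : vshift R g -> g i \in reach_set (Linf L g) i.
Proof. by move=> Rg; rewrite inE; apply/asboolP; exists g. Qed.

End Reachability.

Section States.
Variables (S V : finType) (L : V -> S) (R : rel V) (N : nat).

(* A state at position i of a point x is (x_i, (P, p), (F, f)): P is the set of
   vertices at which an R-path presenting ... x_(i-1) x_i can end, F the set of
   those from which one presenting x_i x_(i+1) ... can start, p = x_(i-1) ... x_(i-N)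
   and f = x_(i+1) ... x_(i+N). *)
Definition state : finType :=
  (S * ({set V} * N.-tuple S) * ({set V} * N.-tuple S))%type.

Definition slabel (h : state) : S := h.1.1.
Definition spast (h : state) : {set V} * N.-tuple S := h.1.2.
Definition sfuture (h : state) : {set V} * N.-tuple S := h.2.

Definition advance (r : rel V) (p : {set V} * N.-tuple S) (a a' : S) :=
  (follow L r p.1 a', tcons p.2 a).

Definition step (h h' : state) : Prop :=
  [/\ spast h' = advance R (spast h) (slabel h) (slabel h'),
      sfuture h = advance (fun u v => R v u) (sfuture h') (slabel h') (slabel h)
    & exists v, v \in (spast h).1 :&: (sfuture h).1].

Definition step_path (y : point state) : Prop := forall i, step (y i) (y (i + 1)).

Definition records (h : state) (z : point S) (i : int) : Prop :=
  [/\ slabel h = z i, forall k : 'I_N, tnth (spast h).2 k = z (i - 1 - (val k)%:Z)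
    & forall k : 'I_N, tnth (sfuture h).2 k = z (i + 1 + (val k)%:Z)].

Lemma records_shiftz h z i : records h z i -> records h (shiftz i z) 0.
Proof.
by move=> [lz pz fz]; split=> [|k|k]; rewrite /shiftz ?add0r ?pz ?fz //; congr z; lia.
Qed.

Lemma records_agree h z z' : records h z 0 -> records h z' 0 -> agree_on N z z'.
Proof.
move=> [lz pz fz] [lz' pz' fz'] j Hj.
case: (ltrgtP j 0) => [j_neg|j_pos|->]; last by rewrite -lz -lz'.
  have k_lt : (absz (- j - 1)%R < N)%N by lia.
  have := pz (Ordinal k_lt); rewrite pz' /=.
  by have -> : 0 - 1 - (absz (- j - 1)%R)%:Z = j by lia.
have k_lt : (absz (j - 1)%R < N)%N by lia.
have := fz (Ordinal k_lt); rewrite fz' /=.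
by have -> : 0 + 1 + (absz (j - 1)%R)%:Z = j by lia.
Qed.

Lemma step_path_records y : step_path y -> forall i, records (y i) (Linf slabel y) i.
Proof.
move=> Sy i; split=> // k.
  have tS j : (spast (y (j + 1))).2 = tcons (spast (y j)).2 (Linf slabel y j).
    by case: (Sy j) => -> _ _.
  exact: (tcons_recurrence tS).
pose t j := (sfuture (y (- j))).2.
have tS j : t (j + 1) = tcons (t j) (Linf slabel y (- j)).
  rewrite /t; case: (Sy (- (j + 1))) => _ + _.
  by rewrite (_ : - (j + 1) + 1 = - j) //; [move=> -> | ring].
have := tcons_recurrence tS (- i) k; rewrite /t opprK => ->.
by congr (Linf _ _ _); ring.
Qed.

Lemma step_path_vshift y :
  step_path y -> exists g : point V, vshift R g /\ Linf L g = Linf slabel y.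
Proof.
move=> Sy.
pose F n := (sfuture (y n%:Z)).1.
pose P n := (spast (y (- n%:Z))).1.
have Fdef n : F n = follow L (fun u v => R v u) (F n.+1) (slabel (y n%:Z)).
  by rewrite /F; case: (Sy n%:Z) => _ -> _; rewrite (_ : n%:Z + 1 = n.+1%:Z) //; lia.
have Pdef n : P n = follow L R (P n.+1) (slabel (y (- n%:Z))).
  rewrite /P (_ : - n%:Z = - n.+1%:Z + 1); last lia.
  by case: (Sy (- n.+1%:Z)) => -> _ _.
have [_ _ [v0 /[!inE] /andP [Pv0 Fv0]]] := Sy 0.
have [fwd [fwd0 Ffwd Rfwd]] : exists f : nat -> V,
    [/\ f 0%N = v0, forall n, f n \in F n & forall n, R (f n) (f n.+1)].
  by apply: chain_from => [n v|//]; rewrite Fdef !inE => /andP [].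
have [bwd [bwd0 Pbwd Rbwd]] : exists f : nat -> V,
    [/\ f 0%N = v0, forall n, f n \in P n & forall n, R (f n.+1) (f n)].
  apply: (chain_from (r := fun u v => R v u)) => [n v|]; last by rewrite /P oppr0.
  by rewrite Pdef !inE => /andP [].
exists (fun i => if i is Negz n then bwd n.+1 else fwd (absz i)); split.
  case=> [n|[|n]] /=; first by rewrite addn1.
    by rewrite subnn fwd0 -bwd0.
  by rewrite subn1.
apply: funext => -[n|n]; rewrite /Linf /=.
  by have := Ffwd n; rewrite Fdef inE => /andP [/eqP].
by have := Pbwd n.+1; rewrite Pdef inE NegzE => /andP [/eqP].
Qed.

Lemma vshift_step_path g :
  vshift R g -> exists y, step_path y /\ Linf slabel y = Linf L g.
Proof.
move=> Rg; set x := Linf L g; pose x' j := x (- j).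
(* the future data are the past data of the time-reversed presentation *)
pose y i : state := (x i, (reach_set L R x i, window_before N x i),
  (reach_set L (fun u v => R v u) x' (- i), window_before N x' (- i))).
exists y; split=> // i; split.
- by rewrite /spast /= reach_set_succ window_before_succ.
- rewrite /sfuture /= (_ : - i = - (i + 1) + 1); last ring.
  rewrite reach_set_succ window_before_succ /x' /= [- - _]opprK.
  by have -> : - (- (i + 1) + 1) = i by ring.
- exists (g i); rewrite inE vshift_reach_set //=.
  have -> : x' = Linf L (fun j => g (- j)) by [].
  rewrite -[in g i](opprK i) vshift_reach_set // => j.
  by have := Rg (- j - 1); rewrite subrK opprD.
Qed.

Lemma step_unique m (a b : nat -> state) :
  (forall i, (i < m)%N -> step (a i) (a i.+1) /\ step (b i) (b i.+1)) ->
  (forall i, (i <= m)%N -> slabel (a i) = slabel (b i)) ->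
  a 0%N = b 0%N -> a m = b m -> forall i, (i <= m)%N -> a i = b i.
Proof.
move=> Sab Lab a0 am i im.
have past_eq : spast (a i) = spast (b i).
  apply: (@recurrence_eq _ (fun j p => advance R p (slabel (a j)) (slabel (a j.+1))) m
    (fun j => spast (a j)) (fun j => spast (b j))) im; last by rewrite a0.
  by move=> j jm; have [[-> _ _] [-> _ _]] := Sab j jm; rewrite !Lab // ltnW.
have future_eq : sfuture (a i) = sfuture (b i).
  apply: (@backward_recurrence_eq _
    (fun j p => advance (fun u v => R v u) p (slabel (a j.+1)) (slabel (a j))) m
    (fun j => sfuture (a j)) (fun j => sfuture (b j))) im; last by rewrite am.
  by move=> j jm; have [[_ -> _] [_ -> _]] := Sab j jm; rewrite !Lab // ltnW.
move: (Lab i im) past_eq future_eq; rewrite /slabel /spast /sfuture.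
by case: (a i) => [[? ?] ?]; case: (b i) => [[? ?] ?] /= -> -> ->.
Qed.

End States.

Arguments slabel {S V N} h.

Section Presentation.
Variables (S : finType) (X : point S -> Prop) (phi : point S -> point S).
Variables (W : finType) (E : W -> W -> Prop) (tau : W -> W) (lab : W -> S).

Definition epath (y : point W) : Prop := forall i, E (y i) (y (i + 1)).

Definition flip_path (y : point W) : point W := fun i => tau (y (- i)).

Record flip_presentation : Prop := FlipPresentation {
  pres_tauK : involutive tau;
  pres_edge : forall u v, E u v <-> E (tau v) (tau u);
  pres_B1 : forall u v, E u v -> B1 X (lab u) /\ B1 X (lab v);
  pres_factor : forall x, X x <-> exists y, epath y /\ Linf lab y = x;
  pres_no_diamonds : forall m (a b : nat -> W),
    (forall i, (i < m)%N -> E (a i) (a i.+1) /\ E (b i) (b i.+1)) ->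
    (forall i, (i <= m)%N -> lab (a i) = lab (b i)) ->
    a 0%N = b 0%N -> a m = b m -> forall i, (i <= m)%N -> a i = b i;
  pres_label : forall y, epath y -> Linf lab (flip_path y) = phi (Linf lab y);
  pres_fixed : forall (delta : nat) x, X x -> iter delta (@shift S) (phi x) = x ->
    exists y, [/\ epath y, Linf lab y = x & iter delta (@shift W) (flip_path y) = y] }.

Hypothesis presW : flip_presentation.

Lemma epath_flip y : epath y -> epath (flip_path y).
Proof.
move=> Ey i; apply: (pres_edge presW _ _).1.
by rewrite opprD; have := Ey (- i - 1); rewrite subrK.
Qed.

End Presentation.

Definition matrix_flip_presentation (S : finType) (X : point S -> Prop)
    (phi : point S -> point S) (n : nat) (L : 'I_n -> S) (A J : 'M[int]_n) : Prop :=
  (forall a, B1 X (L a)) /\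
  (zero_one A /\ zero_one J) /\
  (forall x, X x <-> exists y, XA A y /\ Linf L y = x) /\
  no_graph_diamonds A L /\
  (J *m A = A^T *m J /\ J *m J = 1%:M) /\
  (forall y, XA A y -> Linf L (phiJA J y) = phi (Linf L y)) /\
  (forall (delta : nat) (x : point S), (delta <= 1)%N -> X x ->
     iter delta (@shift S) (phi x) = x ->
     exists y, [/\ XA A y, Linf L y = x & iter delta (@shift 'I_n) (phiJA J y) = y]).

Lemma empty_matrix_flip_presentation (S : finType) (X : point S -> Prop) phi :
  (forall x, ~ X x) -> exists n L A J, @matrix_flip_presentation S X phi n L A J.
Proof.
move=> noX; have I0 (i : 'I_0) : False by case: i.
exists 0%N, (fun i => match I0 i with end), 0, 0.
do !split=> //; try by move=> a; case: (I0 a).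
- by move=> /noX.
- by move=> [y]; case: (I0 (y 0)).
- by move=> [m [a]]; case: (I0 (a 0%N)).
- by apply/matrixP => a; case: (I0 a).
- by apply/matrixP => a; case: (I0 a).
- by move=> y; case: (I0 (y 0)).
- by move=> delta x _ /noX.
Qed.

Section Matrices.
Variables (S : finType) (X : point S -> Prop) (phi : point S -> point S).
Variables (W : finType) (E : W -> W -> Prop) (tau : W -> W) (lab : W -> S).
Hypothesis presW : flip_presentation X phi E tau lab.
Variable c : S.
Hypothesis Xc : B1 X c.

Local Notation n := #|W|.

Definition vert_path (y : point 'I_n) : point W := fun i => enum_val (y i).

(* vertices lying on no path get the arbitrary symbol c of X *)
Definition label_mx (i : 'I_n) : S :=
  if `[< B1 X (lab (enum_val i)) >] then lab (enum_val i) else c.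

Definition adj_mx : 'M[int]_n := \matrix_(i, j) (`[< E (enum_val i) (enum_val j) >])%:R.

Definition flip_idx (i : 'I_n) : 'I_n := enum_rank (tau (enum_val i)).

Lemma flip_idxK : involutive flip_idx.
Proof. by move=> i; rewrite /flip_idx enum_rankK (pres_tauK presW) enum_valK. Qed.

Definition flip_perm : 'S_n := perm (inv_inj flip_idxK).

Lemma flip_permE i : flip_perm i = flip_idx i.
Proof. by rewrite permE. Qed.

Lemma flip_permK : (flip_perm * flip_perm = 1)%g.
Proof. by apply/permP => i; rewrite permM !flip_permE flip_idxK perm1. Qed.

Lemma perm_mx_flip_sqr : perm_mx flip_perm *m perm_mx flip_perm = 1%:M :> 'M[int]_n.
Proof. by rewrite -perm_mxM flip_permK perm_mx1. Qed.

Lemma perm_mx_flip_adj :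
  perm_mx flip_perm *m adj_mx = adj_mx^T *m perm_mx flip_perm.
Proof.
have flip_permV : (flip_perm^-1 = flip_perm)%g.
  by rewrite -[LHS]mul1g -flip_permK mulgK.
rewrite -[perm_mx _ in RHS]trmxK tr_perm_mx flip_permV -trmx_mul -!row_permE.
apply/matrixP => i j; rewrite !mxE !flip_permE /flip_idx !enum_rankK.
by rewrite (asbool_equiv_eq (pres_edge presW _ _)) (pres_tauK presW).
Qed.

Lemma tauJ_flip_perm a : tauJ (perm_mx flip_perm) a = flip_perm a.
Proof.
rewrite /tauJ; case: pickP => [b|/(_ (flip_perm a))]; rewrite /perm_mx !mxE.
  by case: (flip_perm a =P b) => [->|].
by rewrite eqxx.
Qed.

Definition index_path (y : point W) : point 'I_n := fun i => enum_rank (y i).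

Lemma vert_index_path y : vert_path (index_path y) = y.
Proof. by apply: funext => i; rewrite /vert_path /index_path enum_rankK. Qed.

Lemma adj_mx1 i j : adj_mx i j = 1 <-> E (enum_val i) (enum_val j).
Proof. by rewrite mxE; case: asboolP. Qed.

Lemma XA_adj_mx y : XA adj_mx y <-> epath E (vert_path y).
Proof. by split=> Ey i; apply/adj_mx1; apply: Ey. Qed.

Lemma fpath_B1 m (a : nat -> W) : (0 < m)%N ->
  (forall i, (i < m)%N -> E (a i) (a i.+1)) -> forall i, (i <= m)%N -> B1 X (lab (a i)).
Proof.
move=> m_gt0 Ea i im; case: (ltnP i m) => [/Ea /(pres_B1 presW) [] //|mi].
have -> : i = (m.-1).+1 by lia.
by have [_] := pres_B1 presW (Ea m.-1 ltac:(lia)).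
Qed.

Lemma label_mxE i : B1 X (lab (enum_val i)) -> label_mx i = lab (enum_val i).
Proof. by rewrite /label_mx; case: asboolP. Qed.

Lemma Linf_label_mx y : XA adj_mx y -> Linf label_mx y = Linf lab (vert_path y).
Proof.
move=> /XA_adj_mx Ey; apply: funext => i; rewrite /Linf label_mxE //.
exact: (pres_B1 presW (Ey i)).1.
Qed.

Lemma phiJA_flip_perm y :
  phiJA (perm_mx flip_perm) y = index_path (flip_path tau (vert_path y)).
Proof. by apply: funext => i; rewrite /phiJA tauJ_flip_perm flip_permE. Qed.

Lemma matrix_flip_presentation_of_graph :
  matrix_flip_presentation X phi label_mx adj_mx (perm_mx flip_perm).
Proof.
split; first by move=> i; rewrite /label_mx; case: asboolP.
split; first by split=> i j; rewrite !mxE; [case: asboolP | case: eqP]; auto.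
split.
  move=> x; rewrite (pres_factor presW); split=> [[yw [Eyw <-]]|[y [XAy <-]]].
    exists (index_path yw); rewrite XA_adj_mx Linf_label_mx ?XA_adj_mx;
      by rewrite vert_index_path.
  by exists (vert_path y); rewrite -XA_adj_mx -Linf_label_mx.
split.
  move=> [m [a [b [m_gt0 Eab [a0 am] Lab [i [im]]]]]]; apply; apply: enum_val_inj.
  have Ea j : (j < m)%N -> E (enum_val (a j)) (enum_val (a j.+1)).
    by move=> /Eab [/adj_mx1].
  have Eb j : (j < m)%N -> E (enum_val (b j)) (enum_val (b j.+1)).
    by move=> /Eab [_ /adj_mx1].
  apply: (pres_no_diamonds presW (a := fun j => enum_val (a j))
                                 (b := fun j => enum_val (b j)) _ _ _ _ im).
  - by move=> j jm; split; [exact: Ea | exact: Eb].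
  - move=> j jm; rewrite -label_mxE; last exact: fpath_B1 m_gt0 Ea j jm.
    by rewrite -label_mxE ?Lab //; exact: fpath_B1 m_gt0 Eb j jm.
  - by rewrite /= a0.
  - by rewrite /= am.
split; first exact: conj perm_mx_flip_adj perm_mx_flip_sqr.
split.
  move=> y XAy; rewrite phiJA_flip_perm Linf_label_mx; last first.
    by rewrite XA_adj_mx vert_index_path; apply: epath_flip presW _ (proj1 (XA_adj_mx y) XAy).
  by rewrite vert_index_path (pres_label presW) -?Linf_label_mx // -XA_adj_mx.
move=> delta x _ Xx fix_x; have [yw [Eyw <- fix_yw]] := pres_fixed presW Xx fix_x.
have XAy : XA adj_mx (index_path yw) by rewrite XA_adj_mx vert_index_path.
exists (index_path yw); split=> //; first by rewrite Linf_label_mx // vert_index_path.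
by rewrite phiJA_flip_perm vert_index_path iter_shift_map fix_yw.
Qed.

End Matrices.

Section PairGraph.
Variables (S V : finType) (L : V -> S) (R : rel V) (N : nat).
Variables (X : point S -> Prop) (phi : point S -> point S).
Hypothesis XR : forall x, X x <-> exists g, vshift R g /\ x = Linf L g.
Hypothesis flipX : is_flip X phi.
Hypothesis phi_unif : forall x y, X x -> X y -> agree_on N x y -> phi x 0 = phi y 0.

Local Notation state := (state S V N).
Local Notation step := (@step S V L R N).
Local Notation step_path := (@step_path S V L R N).

Let soficX : sofic X. Proof. by exists V, R, L. Qed.

Lemma step_path_X s : step_path s -> X (Linf slabel s).
Proof. by move=> /step_path_vshift [g [Rg <-]]; apply/XR; exists g. Qed.

Lemma X_step_path x : X x -> exists s, step_path s /\ Linf slabel s = x.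
Proof.
move=> /XR [g [Rg ->]].
by have [s [Ss <-]] := vshift_step_path L N Rg; exists s.
Qed.

Definition flip_label (h : state) : S :=
  if pselect (exists z, X z /\ records h z 0) is left ex then phi (sval (cid ex)) 0
  else slabel h.

Lemma flip_labelE h z i : X z -> records h z i -> flip_label h = phi z (- i).
Proof.
move=> Xz /records_shiftz hz; rewrite /flip_label.
case: pselect => [ex|]; last by case; exists (shiftz i z); split=> //; exact: sofic_shiftz.
have [Xz' hz'] := svalP (cid ex).
rewrite (phi_unif Xz' _ (records_agree hz' hz)); last exact: sofic_shiftz.
by rewrite (flip_shiftz _ soficX flipX) // /shiftz add0r.
Qed.

Definition compatible (u : state * state) : Prop :=
  [/\ slabel u.2 = flip_label u.1, slabel u.1 = flip_label u.2,
      B1 X (slabel u.1) & B1 X (slabel u.2)].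

Definition pair_step (u v : state * state) : Prop :=
  [/\ step u.1 v.1, step v.2 u.2, compatible u & compatible v].

Lemma compatible_swap u : compatible (swap_pair u) <-> compatible u.
Proof. by case: u => a b; split=> -[]. Qed.

Lemma pair_path (s s' : point state) c :
  step_path s -> step_path s' -> X (Linf slabel s) ->
  Linf slabel s' = shiftz (- c) (phi (Linf slabel s)) ->
  epath pair_step (fun i => (s i, s' (c - i))).
Proof.
set x := Linf slabel s; set z := Linf slabel s' => Ss Ss' Xx zE.
have [phiX _ _ phiK] := flipX.
have Xz : X z by rewrite zE; exact: sofic_shiftz soficX (phiX _ Xx).
have phi_z : phi z = shiftz c x.
  by rewrite zE (flip_shiftz _ soficX flipX (phiX _ Xx)) opprK phiK.
have compat i : compatible (s i, s' (c - i)).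
  split=> /=.
  - rewrite (flip_labelE Xx (step_path_records Ss i)).
    by rewrite -[slabel _]/(z (c - i)) zE /shiftz; congr phi; ring.
  - rewrite (flip_labelE Xz (step_path_records Ss' _)) phi_z /shiftz.
    by congr x; ring.
  - by exists x; split=> //; exists i.
  - by exists z; split=> //; exists (c - i).
move=> i; split; [exact: Ss | | exact: compat | exact: compat].
by have := Ss' (c - (i + 1)); rewrite (_ : c - (i + 1) + 1 = c - i) //; ring.
Qed.

Local Notation pair_label := (fun u : state * state => slabel u.1).

Lemma pair_step_swap u v : pair_step u v <-> pair_step (swap_pair v) (swap_pair u).
Proof.
by split=> -[Su Sv cu cv]; split=> //; apply/compatible_swap => //; case: u v Su Sv cu cv.
Qed.

Lemma pair_no_diamonds m (a b : nat -> state * state) :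
  (forall i, (i < m)%N -> pair_step (a i) (a i.+1) /\ pair_step (b i) (b i.+1)) ->
  (forall i, (i <= m)%N -> slabel (a i).1 = slabel (b i).1) ->
  a 0%N = b 0%N -> a m = b m -> forall i, (i <= m)%N -> a i = b i.
Proof.
move=> Eab Lab a0 am.
have fst_eq : forall i, (i <= m)%N -> (a i).1 = (b i).1.
  apply: (@step_unique _ _ L R N m (fun i => (a i).1) (fun i => (b i).1)) => //.
  - by move=> i /Eab [[Sa _ _ _] [Sb _ _ _]].
  - by rewrite a0.
  - by rewrite am.
have snd_label k : (k <= m)%N -> slabel (a k).2 = slabel (b k).2.
  case: (ltnP k m) => [km _ | mk km].
    have [[_ _ [-> _ _ _] _] [_ _ [-> _ _ _] _]] := Eab k km.
    by rewrite fst_eq // ltnW.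
  have -> : k = m by apply/eqP; rewrite eqn_leq km mk.
  by rewrite am.
have snd_rev : forall i, (i <= m)%N -> (a (m - i)%N).2 = (b (m - i)%N).2.
  apply: (@step_unique _ _ L R N m (fun i => (a (m - i)%N).2) (fun i => (b (m - i)%N).2)).
  - move=> i im; have [[_ Sa _ _] [_ Sb _ _]] := Eab (m - i.+1)%N ltac:(lia).
    by rewrite subnSK in Sa Sb.
  - by move=> i im; apply: snd_label; rewrite leq_subr.
  - by rewrite subn0 am.
  - by rewrite subnn a0.
move=> i im; apply: injective_projections; first exact: fst_eq.
by have := snd_rev (m - i)%N (leq_subr i m); rewrite subKn.
Qed.

Lemma pair_flip_label y : epath pair_step y ->
  Linf pair_label (flip_path swap_pair y) = phi (Linf pair_label y).
Proof.
move=> Ey; have Ss : step_path (fun i => (y i).1) by move=> i; case: (Ey i).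
apply: funext => i; rewrite /Linf /flip_path /=.
have [_ _ [-> _ _ _] _] := Ey (- i).
by rewrite (flip_labelE (step_path_X Ss) (step_path_records Ss (- i))) opprK.
Qed.

Lemma pair_fixed (delta : nat) x : X x -> iter delta (@shift S) (phi x) = x ->
  exists y, [/\ epath pair_step y, Linf pair_label y = x &
                iter delta (@shift _) (flip_path swap_pair y) = y].
Proof.
move=> Xx; rewrite iter_shift => fix_x; have [s [Ss sx]] := X_step_path Xx.
exists (fun i => (s i, s (- delta%:Z - i))); split=> //.
  by apply: pair_path; rewrite ?sx ?opprK.
rewrite iter_shift; apply: funext => i; rewrite /shiftz /flip_path /=.
by congr (s _, s _); ring.
Qed.

Lemma pair_presentation : flip_presentation X phi pair_step swap_pair pair_label.
Proof.
have [phiX _ _ _] := flipX; split.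
- exact: swap_pairK.
- exact: pair_step_swap.
- by move=> u v [_ _ [_ _ Bu _] [_ _ Bv _]].
- move=> x; split=> [Xx|[y [Ey <-]]].
    have [s [Ss sx]] := X_step_path Xx.
    have [s' [Ss' s'x]] := X_step_path (phiX _ Xx).
    exists (fun i => (s i, s' (0 - i))); split=> //.
    by apply: pair_path; rewrite ?sx ?s'x ?oppr0 ?shiftz0.
  by apply: step_path_X => i; case: (Ey i).
- exact: pair_no_diamonds.
- exact: pair_flip_label.
- exact: pair_fixed.
Qed.

End PairGraph.

Unset Implicit Arguments.

Theorem proposition2p1 (S : finType) (X : point S -> Prop)
  (phi : point S -> point S) :
  sofic X -> is_flip X phi ->
  exists (n : nat) (L : 'I_n -> S) (A J : 'M[int]_n),
    (forall a, B1 X (L a)) /\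
    (zero_one A /\ zero_one J) /\
    (forall x, X x <-> exists y, XA A y /\ Linf L y = x) /\
    no_graph_diamonds A L /\
    (J *m A = A^T *m J /\ J *m J = 1%:M) /\
    (forall y, XA A y -> Linf L (phiJA J y) = phi (Linf L y)) /\
    (forall (delta : nat) (x : point S), (delta <= 1)%N -> X x ->
       iter delta (@shift S) (phi x) = x ->
       exists y, [/\ XA A y, Linf L y = x &
                     iter delta (@shift 'I_n) (phiJA J y) = y]).
Proof.
move=> soficX flipX.
suff [n [L [A [J presA]]]] : exists n (L : 'I_n -> S) A J, matrix_flip_presentation X phi L A J.
  by exists n, L, A, J.
have [[c Xc]|noB1] := pselect (exists c, B1 X c); last first.
  apply: empty_matrix_flip_presentation => x Xx; apply: noB1.
  by exists (x 0), x; split; last exists 0.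
have [_ phi_cont _ _] := flipX.
have [N phi_unif] := sofic_uniformly_continuous soficX phi_cont.
have [V [R [L XR]]] := soficX.
have presW := pair_presentation XR flipX phi_unif.
by have presA := matrix_flip_presentation_of_graph presW Xc; do 4!eexists; eassumption.
Qed.
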